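(* Let $F'\in\mathcal I$ and suppose $\sum_{u\in F'}f(u)+\sum_{v\in P}w'(v)d(v,F')^p\le z'$. Then $\sum_{u\in F'}f(u)+\sum_{v\in P}w(v)d(v,F')^p\le 4\cdot16^{p-1}z^*+\left(\tfrac87\right)^{p-1}z'$, where $z^*$ is the optimal value of $\textsc{FacilityMatLP}(w,\mathcal M)$.
   Context: Setting: $p\ge1$; a finite metric $d$ on $P\cup\mathcal F$; $f:\mathcal F\to\mathbb{R}_{\ge0}$; $w:P\to\mathbb{R}_{\ge0}$; matroid $\mathcal M=(\mathcal F,\mathcal I)$ with rank $r$. $\textsc{FacilityMatLP}(w,\mathcal M)$: minimize $\sum_u f(u)y_u+\sum_{v,u}w(v)d(v,u)^px_{vu}$ s.t. $\sum_u x_{vu}\ge1$, $\sum_{u\in S}y_u\le r(S)$ for all $S\subseteq\mathcal F$, $0\le x_{vu}\le y_u$. Let $(x,y)$ be an optimal solution (value $z^*$) with $\sum_u x_{vu}=1$ for all $v$, and $\mathcal R(v):=(\sum_u d(v,u)^px_{vu})^{1/p}$. $w'$ is obtained by client consolidation: order clients so that $\mathcal R(v_1)\le\dots\le\mathcal R(v_n)$; set $w':=w$; for $i=1,\dots,n-1$ and $j=i+1,\dots,n$: if $d(v_i,v_j)\le2^{(p+1)/p}\mathcal R(v_j)$ and $w'(v_i)>0$, set $w'(v_i)\leftarrow w'(v_i)+w'(v_j)$, $w'(v_j)\leftarrow0$. *)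

From HB Require Import structures.
From mathcomp Require Import all_boot all_order all_algebra.
From mathcomp Require Import reals exp.
Set Implicit Arguments. Unset Strict Implicit. Unset Printing Implicit Defensive.
Import Order.TTheory GRing.Theory Num.Theory.
Local Open Scope ring_scope.

Section Defs.
Variables (R : realType) (V : finType).

Definition is_metric_on (X : {set V}) (d : V -> V -> R) : Prop :=
  (forall a b, a \in X -> b \in X -> 0 <= d a b) /\
  (forall a b, a \in X -> b \in X -> (d a b = 0 <-> a = b)) /\
  (forall a b, a \in X -> b \in X -> d a b = d b a) /\
  (forall a b c, a \in X -> b \in X -> c \in X -> d a c <= d a b + d b c).

Definition is_matroid (Fs : {set V}) (indep : {set V} -> bool) : Prop :=
  (forall A : {set V}, indep A -> A \subset Fs) /\
  indep set0 /\
  (forall A B : {set V}, A \subset B -> indep B -> indep A) /\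
  (forall A B : {set V}, indep A -> indep B -> #|A| < #|B| ->
     exists2 e, e \in B :\: A & indep (e |: A))%N.

Definition mrank (indep : {set V} -> bool) (S : {set V}) : nat :=
  (\max_(A : {set V} | (A \subset S) && indep A) #|A|)%N.

Definition lp_obj (p : R) (d : V -> V -> R) (f w : V -> R) (Fs P : {set V})
    (x : V -> V -> R) (y : V -> R) : R :=
  \sum_(u in Fs) f u * y u +
  \sum_(v in P) \sum_(u in Fs) w v * (d v u) `^ p * x v u.

Definition lp_feasible (indep : {set V} -> bool) (Fs P : {set V})
    (x : V -> V -> R) (y : V -> R) : Prop :=
  (forall v, v \in P -> 1 <= \sum_(u in Fs) x v u) /\
  (forall S : {set V}, S \subset Fs -> \sum_(u in S) y u <= (mrank indep S)%:R) /\
  (forall v u, v \in P -> u \in Fs -> 0 <= x v u /\ x v u <= y u).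

Definition Rad (p : R) (d : V -> V -> R) (Fs : {set V}) (x : V -> V -> R)
    (v : V) : R :=
  (\sum_(u in Fs) (d v u) `^ p * x v u) `^ (p^-1).

Definition consol_step (p : R) (d : V -> V -> R) (Rv : V -> R)
    (w : V -> R) (a b : V) : V -> R :=
  if (d a b <= 2 `^ ((p + 1) / p) * Rv b) && (0 < w a) then
    (fun v => if v == a then w a + w b else if v == b then 0 else w v)
  else w.

(* client consolidation along the ordered list s = [v_1; ...; v_n]:
   for i = 1..n-1, for j = i+1..n, apply the step to (v_i, v_j) *)
Fixpoint consolidate (p : R) (d : V -> V -> R) (Rv : V -> R)
    (s : seq V) (w : V -> R) : V -> R :=
  match s with
  | [::] => w
  | a :: t => consolidate p d Rv t (foldl (fun w' b => consol_step p d Rv w' a b) w t)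
  end.

(* d(v, A) = min_{u in A} d(v,u) (used only for nonempty A) *)
Definition distS (d : V -> V -> R) (v : V) (A : {set V}) : R :=
  if [pick u in A] is Some u0 then \big[Order.min/d v u0]_(u in A) d v u else 0.

End Defs.

From HB Require Import structures.
From mathcomp Require Import all_boot all_order all_algebra.
From mathcomp Require Import reals exp.
From mathcomp Require Import interval_inference.
From mathcomp Require convex hoelder classical_sets.
From mathcomp Require Import lra ring.
Set Implicit Arguments. Unset Strict Implicit. Unset Printing Implicit Defensive.
Import Order.TTheory GRing.Theory Num.Theory.
Local Open Scope ring_scope.

(* Let D(v) = d(v, F')^p.  Consolidation moves the whole weight of a client b
   onto an earlier client a with d(a, b) <= 2^((p+1)/p) R(b).  For such a pair
   the triangle inequality gives d(b, F') <= d(a, F') + 2^((p+1)/p) R(b), and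
   the weighted power-mean inequality (a + b)^p <= (8/7)^(p-1) a^p + 8^(p-1) b^p
   (convexity of x^p with weights 7/8, 1/8) turns this into
     D(b) <= (8/7)^(p-1) D(a) + 4 * 16^(p-1) R(b)^p.
   An invariant of the consolidation loop ([charged]) splits the current
   weights into weight still at its client and weight moved in; the original
   cost sum_v w(v) D(v) is then paid by (8/7)^(p-1) times the consolidated cost
   plus 4 * 16^(p-1) sum_v w(v) R(v)^p, and the latter sum is at most the LP
   value z* since R(v)^p is the fractional connection cost of v.  Adding the
   (nonnegative) opening cost of F' gives the theorem. *)

Section PowerInequalities.
Variables (R : realType) (p : R).
Hypothesis p_ge1 : 1 <= p.

Lemma powR_pred (c : R) : 0 < c -> c `^ p = c `^ (p - 1) * c.
Proof.
move=> c_gt0; have c_neq0 : (p - 1 + 1 == 0) ==> (c != 0).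
  by apply/implyP => _; rewrite gt_eqF.
by rewrite -[in LHS](subrK 1 p) (powRD c_neq0) powRr1 // ltW.
Qed.

(* Weighted power-mean inequality: splitting a + b with weights t and 1 - t,
   (a + b)^p <= t^(1-p) a^p + (1-t)^(1-p) b^p; a consequence of the
   convexity of x |-> x^p on [0, +oo[. *)
Lemma powR_split (t a b : R) : 0 < t < 1 -> 0 <= a -> 0 <= b ->
  (a + b) `^ p <= t^-1 `^ (p - 1) * a `^ p + (1 - t)^-1 `^ (p - 1) * b `^ p.
Proof.
move=> /andP[t_gt0 t_lt1] a_ge0 b_ge0.
have s_gt0 : 0 < 1 - t by rewrite subr_gt0.
have weighted (c u : R) : 0 < c -> 0 <= u -> c * (c^-1 * u) `^ p = c^-1 `^ (p - 1) * u `^ p.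
  move=> c_gt0 u_ge0; have ci_gt0 : 0 < c^-1 by rewrite invr_gt0.
  rewrite powRM ?(ltW ci_gt0) // (powR_pred ci_gt0).
  by field; rewrite gt_eqF.
have -> : a + b = t * (t^-1 * a) + (1 - t) * ((1 - t)^-1 * b).
  by field; rewrite !gt_eqF.
have convexity := @hoelder.convex_powR R p p_ge1 (Itv01 (ltW t_gt0) (ltW t_lt1))
  (t^-1 * a) ((1 - t)^-1 * b).
apply: le_trans.
  by apply: convexity; rewrite classical_sets.inE /= in_itv /= andbT mulr_ge0 // invr_ge0 ltW.
by rewrite (convex.convRE (R:=R)) /= /unstable.onem weighted // weighted.
Qed.

Lemma powR_split78 (a b : R) : 0 <= a -> 0 <= b ->
  (a + b) `^ p <= (8/7) `^ (p - 1) * a `^ p + 8 `^ (p - 1) * b `^ p.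
Proof.
move=> a_ge0 b_ge0; have t01 : 0 < (7/8 : R) < 1.
  by rewrite divr_gt0 //= ltr_pdivrMr // mul1r ltr_nat.
have := powR_split t01 a_ge0 b_ge0.
have -> : (7/8 : R)^-1 = 8/7 by field.
by have -> : (1 - 7/8 : R)^-1 = 8 by field.
Qed.

(* 8^(p-1) (2^((p+1)/p))^p = 4 * 16^(p-1): the factor charged to a client
   whose weight is moved across a distance 2^((p+1)/p) R(v). *)
Lemma consolidation_constant :
  8 `^ (p - 1) * (2 `^ ((p + 1) / p)) `^ p = 4 * 16 `^ (p - 1).
Proof.
have p_neq0 : p != 0 by rewrite gt_eqF // (lt_le_trans ltr01).
have two_neq0 : (p - 1 + 2 == 0) ==> ((2 : R) != 0) by apply/implyP => _; rewrite pnatr_eq0.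
have exp_eq : (p + 1) / p * p = p - 1 + 2 by rewrite mulfVK //; ring.
have sixteen : (16 : R) = 8 * 2 by lra.
rewrite -powRrM exp_eq (powRD two_neq0) (powR_mulrn 2) // sixteen powRM //.
ring.
Qed.

End PowerInequalities.

Section Distances.
Variables (R : realType) (V : finType) (X : {set V}) (d : V -> V -> R).
Implicit Types (A : {set V}) (a b u v : V).

Lemma distS_le v A u : u \in A -> distS d v A <= d v u.
Proof.
move=> uA; rewrite /distS; case: pickP => [u0 _|/(_ u)]; last by rewrite uA.
exact: bigmin_le_cond.
Qed.

Lemma distS_attained v A : A != set0 -> exists2 u, u \in A & distS d v A = d v u.
Proof.
move=> /set0Pn [u1 u1A]; rewrite /distS.
case: pickP => [u0 u0A|/(_ u1)]; last by rewrite u1A.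
apply: (big_ind (fun m => exists2 u, u \in A & m = d v u)); first by exists u0.
- by move=> m1 m2 [a1 a1A ->] [a2 a2A ->]; rewrite /Order.min; case: ifP => _;
    [exists a1 | exists a2].
- by move=> u uA; exists u.
Qed.

Hypothesis d_metric : is_metric_on X d.

Lemma distS_ge0 v A : v \in X -> A \subset X -> A != set0 -> 0 <= distS d v A.
Proof.
move=> vX AX /(distS_attained v) [u uA ->].
by case: d_metric => d_ge0 _; apply: d_ge0 => //; apply: (subsetP AX).
Qed.

Lemma distS_triangle a b A : a \in X -> b \in X -> A \subset X -> A != set0 ->
  distS d b A <= d a b + distS d a A.
Proof.
move=> aX bX AX /(distS_attained a) [u uA ->].
case: d_metric => _ [_ [d_sym d_tri]].
apply: le_trans (distS_le b uA) _; rewrite -(d_sym b a) //.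
exact: d_tri (subsetP AX u uA).
Qed.

Lemma distS_powR_transfer (p r : R) a b A : 1 <= p -> 0 <= r ->
  a \in X -> b \in X -> A \subset X -> A != set0 ->
  d a b <= 2 `^ ((p + 1) / p) * r ->
  distS d b A `^ p <=
    (8/7) `^ (p - 1) * distS d a A `^ p + 4 * 16 `^ (p - 1) * r `^ p.
Proof.
move=> p_ge1 r_ge0 aX bX AX A_n0 dab.
have Da_ge0 := distS_ge0 aX AX A_n0.
have cr_ge0 : 0 <= 2 `^ ((p + 1) / p) * r by rewrite mulr_ge0 ?powR_ge0.
have Db_le : distS d b A <= distS d a A + 2 `^ ((p + 1) / p) * r.
  by rewrite addrC (le_trans (distS_triangle aX bX AX A_n0)) // lerD2r.
have split := powR_split78 p_ge1 Da_ge0 cr_ge0.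
rewrite powRM ?powR_ge0 // mulrA consolidation_constant // in split.
apply: le_trans _ split; apply: ge0_ler_powR Db_le.
- by rewrite (le_trans ler01).
- by rewrite nnegrE distS_ge0.
- by rewrite nnegrE addr_ge0.
Qed.

End Distances.

Lemma sum_update2 (T : finType) (Z : zmodType) (S : {set T}) (a b : T)
    (g g' : T -> Z) :
  a \in S -> b \in S -> a != b -> (forall v, v != a -> v != b -> g' v = g v) ->
  \sum_(v in S) g' v = \sum_(v in S) g v + (g' a - g a) + (g' b - g b).
Proof.
move=> aS bS ab g'E.
have bS' : (b \in S) && (b != a) by rewrite bS eq_sym.
rewrite (bigD1 a) //= (bigD1 b) //= [in RHS](bigD1 a) //= [in RHS](bigD1 b) //=.
rewrite (eq_bigr g) => [|v /andP[/andP[_ va] vb]]; last exact: g'E.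
set S' := \sum_(_ | _) g _.
rewrite [g a + _]addrC -(addrA _ (g a)) [g' a - g a]addrC addNKr.
rewrite [g b + _]addrC [_ + g' a]addrC -!addrA [g' b - g b]addrC addNKr.
by rewrite [S' + _]addrC.
Qed.

Section ConsolidationAccounting.
Variables (R : realType) (V : finType) (p : R) (d : V -> V -> R) (Rv : V -> R).
Variables (P : {set V}) (w g h : V -> R) (al C : R).
Hypothesis w_ge0 : forall v, v \in P -> 0 <= w v.
Hypothesis g_ge0 : forall v, v \in P -> 0 <= g v.
Hypothesis h_ge0 : forall v, v \in P -> 0 <= h v.
Hypothesis al_ge1 : 1 <= al.
Hypothesis C_ge0 : 0 <= C.
Hypothesis transfer : forall a b, a \in P -> b \in P ->
  d a b <= 2 `^ ((p + 1) / p) * Rv b -> g b <= al * g a + C * h b.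

Local Notation step := (consol_step p d Rv).
Local Notation sweep a t W := (foldl (fun W' b => step W' a b) W t).

(* Invariant of the consolidation: the current weights W split into weight U
   still at its original client and weight M moved in from elsewhere, M
   vanishes on the clients L still to be swept, and the original cost
   sum_v w v * g v is paid by U at rate 1, by M at rate al, and by the
   weight w - U that has left its client at rate C * h. *)
Definition charged (L : seq V) (W : V -> R) : Prop :=
  exists U M : V -> R, [/\ forall v, W v = U v + M v,
    forall v, v \in P -> 0 <= U v /\ 0 <= M v,
    forall v, v \in L -> M v = 0 &
    \sum_(v in P) w v * g v <=
      \sum_(v in P) (U v + al * M v) * g v + C * \sum_(v in P) (w v - U v) * h v].

Lemma charged_init L : charged L w.
Proof.
exists w, (fun=> 0); split => // [v|v vP|]; first by rewrite addr0.
  by split; [exact: w_ge0|].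
have -> : \sum_(v in P) (w v - w v) * h v = 0.
  by rewrite big1 // => v _; rewrite subrr mul0r.
by rewrite [C * _]mulr0 addr0; apply: ler_sum => v _; rewrite mulr0 addr0.
Qed.

Lemma charged_sub L L' W : {subset L' <= L} -> charged L W -> charged L' W.
Proof.
move=> L'L [U [M [WE UM_ge0 M0 cost]]]; exists U, M; split => // v vL'.
exact/M0/L'L.
Qed.

(* One consolidation step moves the whole original weight of an unswept client
   b onto the current head a; this is where [transfer] is used. *)
Lemma charged_step L W a b : charged L W -> a \in P -> b \in P ->
  b \in L -> a \notin L -> charged L (step W a b).
Proof.
move=> [U [M [WE UM_ge0 M0 cost]]] aP bP bL aL.
have ab : a != b by apply: contraNneq aL => ->.
rewrite /consol_step; case: ifP => [/andP [dab _]|_]; last by exists U, M.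
have Mb0 := M0 b bL; have [Ub_ge0 _] := UM_ge0 b bP; have [_ Ma_ge0] := UM_ge0 a aP.
exists (fun v => if v == b then 0 else U v),
       (fun v => if v == a then M a + U b else M v); split.
- move=> v /=; case: (eqVneq v a) => [->|va].
    by rewrite (negbTE ab) !WE Mb0 addr0 addrA.
  by case: (eqVneq v b) => [->|vb]; rewrite ?WE ?Mb0 ?add0r.
- move=> v vP; have [Uv_ge0 Mv_ge0] := UM_ge0 v vP.
  by split; case: ifP => _ //; rewrite addr_ge0.
- by move=> v vL; case: (eqVneq v a) => [va|_]; [move: aL; rewrite -va vL | exact: M0].
apply: (le_trans cost).
rewrite (sum_update2 (g := fun v => (U v + al * M v) * g v)
  (g' := fun v => ((if v == b then 0 else U v) +
                   al * (if v == a then M a + U b else M v)) * g v) aP bP ab);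
  last by move=> v /negbTE -> /negbTE ->.
rewrite (sum_update2 (g := fun v => (w v - U v) * h v)
  (g' := fun v => (w v - (if v == b then 0 else U v)) * h v) aP bP ab);
  last by move=> v _ /negbTE ->.
rewrite !eqxx (negbTE ab) eq_sym (negbTE ab) Mb0.
have := ler_wpM2l Ub_ge0 (transfer aP bP dab); rewrite mulrDr.
set S1 := \sum_(v in P) _; set S2 := \sum_(v in P) _.
lra.
Qed.

Lemma charged_sweep L W a t : charged L W -> a \in P -> a \notin L ->
  {subset t <= L} -> {subset t <= P} -> charged L (sweep a t W).
Proof.
move=> + aP aL; elim: t W => [|b t IH] W //= W_ch tL tP.
apply: IH => [|v vt|v vt]; last 2 first.
- by apply: tL; rewrite inE vt orbT.
- by apply: tP; rewrite inE vt orbT.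
by apply: charged_step => //; [apply: tP | apply: tL]; rewrite mem_head.
Qed.

Lemma charged_consolidate s W : uniq s -> {subset s <= P} -> charged s W ->
  charged [::] (consolidate p d Rv s W).
Proof.
elim: s W => [|a t IH] W //= /andP [aT t_uniq] sP W_ch.
have tP : {subset t <= P} by move=> v vt; apply: sP; rewrite inE vt orbT.
apply: IH => //; apply: charged_sweep => //; last by apply: sP; rewrite mem_head.
by apply: charged_sub W_ch => v vt; rewrite inE vt orbT.
Qed.

(* Reading off the invariant: U and M are both paid at rate at most al. *)
Lemma charged_cost L W : charged L W ->
  \sum_(v in P) w v * g v <=
    al * \sum_(v in P) W v * g v + C * \sum_(v in P) w v * h v.
Proof.
move=> [U [M [WE UM_ge0 _ cost]]]; apply: (le_trans cost).
rewrite [al * _]mulr_sumr; apply: lerD.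
  apply: ler_sum => v vP; have [Uv_ge0 Mv_ge0] := UM_ge0 v vP.
  have al1_ge0 : 0 <= al - 1 by rewrite subr_ge0.
  have := mulr_ge0 (mulr_ge0 al1_ge0 Uv_ge0) (g_ge0 vP); rewrite WE; nra.
apply: ler_wpM2l => //; apply: ler_sum => v vP.
have [Uv_ge0 _] := UM_ge0 v vP; have hv_ge0 := h_ge0 vP; nra.
Qed.

Theorem consolidation_cost s : uniq s -> {subset s <= P} ->
  \sum_(v in P) w v * g v <=
    al * \sum_(v in P) consolidate p d Rv s w v * g v + C * \sum_(v in P) w v * h v.
Proof.
move=> s_uniq sP; apply: charged_cost.
exact: charged_consolidate (charged_init s).
Qed.

End ConsolidationAccounting.

Section FacilityLP.
Variables (R : realType) (V : finType) (p : R) (d : V -> V -> R) (f w : V -> R).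
Variables (indep : {set V} -> bool) (Fs P : {set V}) (x : V -> V -> R) (y : V -> R).
Hypothesis f_ge0 : forall u, u \in Fs -> 0 <= f u.
Hypothesis feasible : lp_feasible indep Fs P x y.
Hypothesis optimal : forall x' y', lp_feasible indep Fs P x' y' ->
  lp_obj p d f w Fs P x y <= lp_obj p d f w Fs P x' y'.

(* The opening cost of an optimal solution is nonnegative.  With a client v,
   y u >= x v u >= 0; without clients, lowering every y u by 1 stays feasible,
   so optimality forces f = 0 on Fs. *)
Lemma lp_opening_cost_ge0 : 0 <= \sum_(u in Fs) f u * y u.
Proof.
case: feasible => [cover [rank_ok xy]].
have [/set0Pn [v vP]|/negPn/eqP P0] := boolP (P != set0).
  apply: sumr_ge0 => u uFs; rewrite mulr_ge0 ?f_ge0 //.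
  by have [x_ge0 x_le_y] := xy v u vP uFs; apply: le_trans x_le_y.
have lowered : lp_feasible indep Fs P x (fun u => y u - 1).
  split; [by move=> v; rewrite P0 inE | split; last by move=> v u; rewrite P0 inE].
  by move=> S SFs; apply: le_trans (rank_ok S SFs); apply: ler_sum => u _; lra.
have := optimal lowered; rewrite /lp_obj lerD2r.
under [X in _ <= X]eq_bigr do rewrite mulrBr mulr1.
rewrite sumrB -[X in X <= _]subr0 lerD2l lerN2 => sum_f_le0.
have f0 : forall u, u \in Fs -> f u = 0.
  by apply/psumr_eq0P => //; apply/eqP; rewrite eq_le sum_f_le0 sumr_ge0.
by rewrite big1 // => u uFs; rewrite f0 ?mul0r.
Qed.

(* R(v)^p is the fractional connection cost of v, so the weighted sum of the
   R(v)^p is bounded by the LP value. *)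
Lemma connection_cost_le_lp_obj : 1 <= p ->
  \sum_(v in P) w v * Rad p d Fs x v `^ p <= lp_obj p d f w Fs P x y.
Proof.
move=> p_ge1; case: feasible => [_ [_ xy]].
have -> : \sum_(v in P) w v * Rad p d Fs x v `^ p =
          \sum_(v in P) \sum_(u in Fs) w v * d v u `^ p * x v u.
  apply: eq_bigr => v vP; rewrite /Rad -powRrM mulVf ?powRr1.
  - by rewrite mulr_sumr; apply: eq_bigr => u _; rewrite mulrA.
  - by apply: sumr_ge0 => u uFs; rewrite mulr_ge0 ?powR_ge0 //; case: (xy v u vP uFs).
  - by rewrite gt_eqF // (lt_le_trans ltr01).
by rewrite /lp_obj lerDr lp_opening_cost_ge0.
Qed.

End FacilityLP.

Theorem mainTheorem10 (R : realType) (V : finType) (p : R)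
    (P Fs : {set V}) (d : V -> V -> R) (f w : V -> R)
    (indep : {set V} -> bool) (x : V -> V -> R) (y : V -> R)
    (s : seq V) (F' : {set V}) (z' : R) :
  1 <= p ->
  is_metric_on (P :|: Fs) d ->
  (forall u, u \in Fs -> 0 <= f u) ->
  (forall v, v \in P -> 0 <= w v) ->
  is_matroid Fs indep ->
  (* (x, y) is an optimal solution of FacilityMatLP(w, M) *)
  lp_feasible indep Fs P x y ->
  (forall x' y', lp_feasible indep Fs P x' y' ->
     lp_obj p d f w Fs P x y <= lp_obj p d f w Fs P x' y') ->
  (forall v, v \in P -> \sum_(u in Fs) x v u = 1) ->
  (* s orders the clients by nondecreasing R(v) *)
  uniq s -> s =i P ->
  sorted (fun a b => Rad p d Fs x a <= Rad p d Fs x b) s ->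
  indep F' -> F' != set0 ->
  \sum_(u in F') f u +
    \sum_(v in P) consolidate p d (Rad p d Fs x) s w v * (distS d v F') `^ p <= z' ->
  \sum_(u in F') f u + \sum_(v in P) w v * (distS d v F') `^ p <=
    4 * 16 `^ (p - 1) * lp_obj p d f w Fs P x y + (8 / 7) `^ (p - 1) * z'.
Proof.
move=> p_ge1 d_metric f_ge0 w_ge0 [indep_sub _] feas opt _ s_uniq sP _ F'_indep F'_n0 z'_bound.
have F'Fs : F' \subset Fs := indep_sub F' F'_indep.
have F'X : F' \subset P :|: Fs by rewrite (subset_trans F'Fs) ?subsetUr.
have PX v : v \in P -> v \in P :|: Fs by rewrite inE => ->.
have s_sub_P : {subset s <= P} by move=> v; rewrite sP.
set al : R := (8/7) `^ (p - 1); set C : R := 4 * 16 `^ (p - 1).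
have al_ge1 : 1 <= al by rewrite -(powRr0 (8/7)) ler_powR ?subr_ge0 //; lra.
have C_ge0 : 0 <= C by rewrite mulr_ge0 ?powR_ge0.
have f_F'_ge0 : 0 <= \sum_(u in F') f u.
  by apply: sumr_ge0 => u uF'; rewrite f_ge0 ?(subsetP F'Fs).
have consolidation := consolidation_cost (Rv := Rad p d Fs x) (g := fun v => distS d v F' `^ p)
  (h := fun v => Rad p d Fs x v `^ p) w_ge0 (fun v _ => powR_ge0 _ _)
  (fun v _ => powR_ge0 _ _) al_ge1 C_ge0
  (fun a b aP bP dab => distS_powR_transfer d_metric p_ge1 (powR_ge0 _ _)
                          (PX a aP) (PX b bP) F'X F'_n0 dab)
  s_uniq s_sub_P.
have lp_bound := connection_cost_le_lp_obj f_ge0 feas opt p_ge1.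
(* With Sf the opening cost of F':  Sf + sum_v w D <= Sf + al * (consolidated
   connection cost) + C * sum_v w R^p <= al * z' + C * z*, using al >= 1. *)
have := ler_wpM2l C_ge0 lp_bound; have := ler_wpM2l (le_trans ler01 al_ge1) z'_bound.
move: consolidation; set Sw := \sum_(v in P) _; set Sc := \sum_(v in P) _.
set SR := \sum_(v in P) _; set Sf := \sum_(u in F') f u; set L := lp_obj _ _ _ _ _ _ _ _.
have : 0 <= (al - 1) * Sf by rewrite mulr_ge0 ?subr_ge0.
nra.
Qed.
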